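(* Let $\Psi:\mathbb{R}\to\mathrm{Sp}(\mathbb{R}^{2n})$ be smooth with $\Psi(0)=\mathbb{1}$, $\Psi(t+T)=\Psi(t)\Psi(T)$ and $\Psi(-t)=I_{\mathbb{R}^{2n}}\Psi(t)I_{\mathbb{R}^{2n}}$ for all $t$. Then $\dim\ker(\Psi(T)-\mathbb{1}_{\mathbb{R}^{2n}})=0$ if and only if both $\Psi(T/2)\mathbb{R}^n\cap\mathbb{R}^n=\{0\}$ and $\Psi(T/2)\,i\mathbb{R}^n\cap i\mathbb{R}^n=\{0\}$.
   Context: $I_{\mathbb{R}^{2n}}=\begin{pmatrix}\mathbb{1}_n&0\\0&-\mathbb{1}_n\end{pmatrix}$ on $\mathbb{R}^{2n}=\mathbb{R}^n\oplus i\mathbb{R}^n$ with $\omega_{std}=\sum dx_i\wedge dy_i$; $\mathbb{R}^n=\mathrm{Fix}\,I_{\mathbb{R}^{2n}}$ and $i\mathbb{R}^n=\mathrm{Fix}(-I_{\mathbb{R}^{2n}})$. (Note that the hypotheses imply $\Psi(T)=I_{\mathbb{R}^{2n}}\Psi(T/2)^{-1}I_{\mathbb{R}^{2n}}\Psi(T/2)$.) *)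

(* Coordinates on R^{2n}: index i < n is x_{i+1}, index n+i is y_{i+1}. *)
From Stdlib Require Import Reals List.
Import ListNotations.
Open Scope R_scope.

Definition vec := nat -> R.
Definition mat := nat -> nat -> R.

Definition fsum (m : nat) (f : nat -> R) : R :=
  fold_right Rplus 0 (map f (seq 0 m)).

Definition mat_vec (n : nat) (A : mat) (v : vec) : vec :=
  fun i => fsum (2 * n) (fun j => A i j * v j).

Definition mat_mul (n : nat) (A B : mat) : mat :=
  fun i k => fsum (2 * n) (fun j => A i j * B j k).

Definition mat_eq (n : nat) (A B : mat) : Prop :=
  forall i j, (i < 2 * n)%nat -> (j < 2 * n)%nat -> A i j = B i j.
Definition vec_eq (n : nat) (v w : vec) : Prop :=
  forall i, (i < 2 * n)%nat -> v i = w i.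
Definition vec0 : vec := fun _ => 0.

Definition id_mat : mat := fun i j => if Nat.eqb i j then 1 else 0.

Definition I_refl (n : nat) : mat :=
  fun i j => if Nat.eqb i j then (if Nat.ltb i n then 1 else -1) else 0.

Definition omega_std (n : nat) (v w : vec) : R :=
  fsum n (fun i => v i * w (n + i)%nat - v (n + i)%nat * w i).

Definition symplectic (n : nat) (A : mat) : Prop :=
  forall v w, omega_std n (mat_vec n A v) (mat_vec n A w) = omega_std n v w.

(* R^n = Fix I = {y = 0};  i R^n = Fix(-I) = {x = 0} *)
Definition in_Rn (n : nat) (v : vec) : Prop :=
  forall i, (i < n)%nat -> v (n + i)%nat = 0.
Definition in_iRn (n : nat) (v : vec) : Prop :=
  forall i, (i < n)%nat -> v i = 0.

Definition in_ker_minus_id (n : nat) (A : mat) (v : vec) : Prop :=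
  vec_eq n (mat_vec n A v) v.

Definition smooth (f : R -> R) : Prop :=
  exists fs : nat -> R -> R, fs 0%nat = f /\
    forall k x, derivable_pt_lim (fs k) x (fs (S k) x).

Definition smooth_mat (n : nat) (Psi : R -> mat) : Prop :=
  forall i j, (i < 2 * n)%nat -> (j < 2 * n)%nat -> smooth (fun t => Psi t i j).

(** Put A := Ψ(T/2) and I := I_{R^{2n}}.  Periodicity at t = -T/2 together with
    reversibility gives A = I A I Ψ(T); since A is injective, Ψ(T) v = v is
    equivalent to A v = I A I v.  Splitting v = x + y with x ∈ R^n and y ∈ iR^n,
    this says A x - I A x = -(A y + I A y), an identity between a vector of iR^n
    and one of R^n, so it holds iff A x ∈ R^n and A y ∈ iR^n.  Hence fixed vectors
    of Ψ(T) correspond to pairs (x, y) with x ∈ R^n ∩ A⁻¹R^n and y ∈ iR^n ∩ A⁻¹iR^n. *)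

From Stdlib Require Import Reals Lra Lia List Arith.
Open Scope R_scope.

Lemma fsum_S m f : fsum (S m) f = fsum m f + f m.
Proof.
  unfold fsum. rewrite seq_S, map_app, fold_right_app. simpl.
  induction (map f (seq 0 m)) as [|a l IH]; simpl; [ring | rewrite IH; ring].
Qed.

Lemma fsum_ext m f g : (forall j, (j < m)%nat -> f j = g j) -> fsum m f = fsum m g.
Proof.
  induction m; intros H; [reflexivity|].
  rewrite !fsum_S, IHm by (intros; apply H; lia). rewrite H by lia. reflexivity.
Qed.

Lemma fsum_plus m f g : fsum m (fun j => f j + g j) = fsum m f + fsum m g.
Proof. induction m; [unfold fsum; simpl; ring|]. rewrite !fsum_S, IHm. ring. Qed.

Lemma fsum_scal_l m c f : c * fsum m f = fsum m (fun j => c * f j).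
Proof. induction m; [unfold fsum; simpl; ring|]. rewrite !fsum_S, <- IHm. ring. Qed.

Lemma fsum_scal_r m c f : fsum m f * c = fsum m (fun j => f j * c).
Proof. induction m; [unfold fsum; simpl; ring|]. rewrite !fsum_S, <- IHm. ring. Qed.

Lemma fsum_zero m : fsum m (fun _ => 0) = 0.
Proof. induction m; [reflexivity|]. rewrite fsum_S, IHm. ring. Qed.

Lemma fsum_swap m p F :
  fsum m (fun k => fsum p (fun j => F j k)) = fsum p (fun j => fsum m (fun k => F j k)).
Proof.
  induction m; [unfold fsum at 1; simpl; symmetry; apply fsum_zero|].
  rewrite fsum_S, IHm, <- fsum_plus. apply fsum_ext. intros. rewrite fsum_S. reflexivity.
Qed.

Lemma fsum_delta m i g :
  fsum m (fun j => if Nat.eqb i j then g j else 0) = if Nat.ltb i m then g i else 0.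
Proof.
  induction m; [reflexivity|]. rewrite fsum_S, IHm.
  destruct (Nat.eqb_spec i m), (Nat.ltb_spec i m), (Nat.ltb_spec i (S m)); subst;
    try lia; ring.
Qed.

Lemma mat_vec_ext n A u u' i : vec_eq n u u' -> mat_vec n A u i = mat_vec n A u' i.
Proof. intros H. unfold mat_vec. apply fsum_ext. intros. rewrite H by lia. reflexivity. Qed.

Lemma mat_vec_compat n A u u' : vec_eq n u u' -> vec_eq n (mat_vec n A u) (mat_vec n A u').
Proof. intros H i _. apply mat_vec_ext, H. Qed.

Lemma mat_vec_mat_eq n A B u : mat_eq n A B -> vec_eq n (mat_vec n A u) (mat_vec n B u).
Proof. intros H i Hi. unfold mat_vec. apply fsum_ext. intros. rewrite H by lia. reflexivity. Qed.

Lemma mat_vec_plus n A u v i :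
  mat_vec n A (fun j => u j + v j) i = mat_vec n A u i + mat_vec n A v i.
Proof. unfold mat_vec. rewrite <- fsum_plus. apply fsum_ext. intros. ring. Qed.

Lemma mat_vec_minus n A u v i :
  mat_vec n A (fun j => u j - v j) i = mat_vec n A u i - mat_vec n A v i.
Proof.
  unfold mat_vec.
  replace (_ - _) with (fsum (2*n) (fun j => A i j * u j)
                        + (-1) * fsum (2*n) (fun j => A i j * v j)) by ring.
  rewrite fsum_scal_l, <- fsum_plus. apply fsum_ext. intros. ring.
Qed.

Lemma mat_vec_zero n A i : mat_vec n A vec0 i = 0.
Proof.
  unfold mat_vec, vec0. rewrite (fsum_ext _ _ (fun _ => 0)) by (intros; ring).
  apply fsum_zero.
Qed.

Lemma mat_vec_null n A u : vec_eq n u vec0 -> vec_eq n (mat_vec n A u) vec0.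
Proof. intros H i Hi. rewrite (mat_vec_compat n A u vec0 H i Hi). apply mat_vec_zero. Qed.

Lemma mat_vec_mul n A B u i :
  mat_vec n (mat_mul n A B) u i = mat_vec n A (mat_vec n B u) i.
Proof.
  unfold mat_vec, mat_mul.
  transitivity (fsum (2*n) (fun k => fsum (2*n) (fun j => A i j * B j k * u k))).
  - apply fsum_ext. intros. rewrite fsum_scal_r. reflexivity.
  - rewrite fsum_swap. apply fsum_ext. intros. rewrite fsum_scal_l.
    apply fsum_ext. intros. ring.
Qed.

Lemma I_refl_act n u i : (i < 2*n)%nat ->
  mat_vec n (I_refl n) u i = if Nat.ltb i n then u i else - u i.
Proof.
  intros Hi. unfold mat_vec, I_refl.
  transitivity (fsum (2*n) (fun j => if Nat.eqb i j
                                     then (if Nat.ltb i n then u j else - u j) else 0)).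
  - apply fsum_ext. intros. destruct (Nat.eqb i j), (Nat.ltb i n); ring.
  - rewrite fsum_delta. destruct (Nat.ltb_spec i (2*n)); [reflexivity | lia].
Qed.

Lemma I_refl_injective n u u' :
  vec_eq n (mat_vec n (I_refl n) u) (mat_vec n (I_refl n) u') -> vec_eq n u u'.
Proof.
  intros H i Hi. specialize (H i Hi). rewrite !I_refl_act in H by exact Hi.
  destruct (Nat.ltb i n); lra.
Qed.

Definition basis_vec (k : nat) : vec := fun j => if Nat.eqb j k then 1 else 0.

Lemma omega_std_basis_y n u i : (i < n)%nat -> omega_std n u (basis_vec (n + i)) = u i.
Proof.
  intros Hi. unfold omega_std, basis_vec.
  rewrite (fsum_ext n _ (fun j => if Nat.eqb i j then u j else 0)).
  - rewrite fsum_delta. destruct (Nat.ltb_spec i n); [reflexivity | lia].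
  - intros j Hj. destruct (Nat.eqb_spec (n+j) (n+i)), (Nat.eqb_spec j (n+i)),
      (Nat.eqb_spec i j); try lia; ring.
Qed.

Lemma omega_std_basis_x n u i : (i < n)%nat -> omega_std n u (basis_vec i) = - u (n + i)%nat.
Proof.
  intros Hi. unfold omega_std, basis_vec.
  rewrite (fsum_ext n _ (fun j => if Nat.eqb i j then - u (n + j)%nat else 0)).
  - rewrite fsum_delta. destruct (Nat.ltb_spec i n); [reflexivity | lia].
  - intros j Hj. destruct (Nat.eqb_spec (n+j) i), (Nat.eqb_spec j i),
      (Nat.eqb_spec i j); try lia; ring.
Qed.

Lemma symplectic_kernel_trivial n A u :
  symplectic n A -> vec_eq n (mat_vec n A u) vec0 -> vec_eq n u vec0.
Proof.
  intros HA Hu.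
  assert (Hdeg : forall w, omega_std n u w = 0).
  { intro w. rewrite <- HA. unfold omega_std.
    rewrite (fsum_ext _ _ (fun _ => 0)) by (intros; rewrite !Hu by lia; unfold vec0; ring).
    apply fsum_zero. }
  intros i Hi. unfold vec0. destruct (Nat.ltb_spec i n).
  - rewrite <- (omega_std_basis_y n u i) by assumption. apply Hdeg.
  - assert (Hx := omega_std_basis_x n u (i - n) ltac:(lia)).
    replace (n + (i - n))%nat with i in Hx by lia. rewrite Hdeg in Hx. lra.
Qed.

Lemma symplectic_injective n A u u' : symplectic n A ->
  vec_eq n (mat_vec n A u) (mat_vec n A u') -> vec_eq n u u'.
Proof.
  intros HA H.
  assert (Hd : vec_eq n (fun j => u j - u' j) vec0).
  { apply (symplectic_kernel_trivial n A _ HA). intros i Hi.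
    rewrite mat_vec_minus, H by exact Hi. unfold vec0. ring. }
  intros i Hi. specialize (Hd i Hi). unfold vec0 in Hd. lra.
Qed.

Definition Rn_part (n : nat) (v : vec) : vec := fun j => if Nat.ltb j n then v j else 0.
Definition iRn_part (n : nat) (v : vec) : vec := fun j => if Nat.ltb j n then 0 else v j.

Lemma Rn_part_in_Rn n v : in_Rn n (Rn_part n v).
Proof. intros i _. unfold Rn_part. destruct (Nat.ltb_spec (n + i) n); [lia | reflexivity]. Qed.

Lemma iRn_part_in_iRn n v : in_iRn n (iRn_part n v).
Proof. intros i Hi. unfold iRn_part. destruct (Nat.ltb_spec i n); [reflexivity | lia]. Qed.

Lemma vec_split n v j : v j = Rn_part n v j + iRn_part n v j.
Proof. unfold Rn_part, iRn_part. destruct (Nat.ltb j n); ring. Qed.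

Lemma in_Rn_split n v :
  in_Rn n v -> vec_eq n (Rn_part n v) v /\ vec_eq n (iRn_part n v) vec0.
Proof.
  intros Hv. unfold Rn_part, iRn_part, vec0.
  split; intros i Hi; destruct (Nat.ltb_spec i n); try reflexivity;
    replace i with (n + (i - n))%nat by lia; rewrite Hv by lia; reflexivity.
Qed.

Lemma in_iRn_split n v :
  in_iRn n v -> vec_eq n (Rn_part n v) vec0 /\ vec_eq n (iRn_part n v) v.
Proof.
  intros Hv. unfold Rn_part, iRn_part, vec0.
  split; intros i Hi; destruct (Nat.ltb_spec i n); try reflexivity;
    rewrite Hv by lia; reflexivity.
Qed.

Lemma in_Rn_compat n v w : vec_eq n v w -> in_Rn n w -> in_Rn n v.
Proof. intros H Hw i Hi. rewrite H by lia. apply Hw, Hi. Qed.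

Lemma in_iRn_compat n v w : vec_eq n v w -> in_iRn n w -> in_iRn n v.
Proof. intros H Hw i Hi. rewrite H by lia. apply Hw, Hi. Qed.

Lemma in_Rn_vec0 n : in_Rn n vec0.
Proof. intros i _. reflexivity. Qed.

Lemma in_iRn_vec0 n : in_iRn n vec0.
Proof. intros i _. reflexivity. Qed.

Lemma commutes_with_I_refl_iff n A v :
  vec_eq n (mat_vec n A v) (mat_vec n (I_refl n) (mat_vec n A (mat_vec n (I_refl n) v)))
  <-> in_Rn n (mat_vec n A (Rn_part n v)) /\ in_iRn n (mat_vec n A (iRn_part n v)).
Proof.
  set (x := Rn_part n v). set (y := iRn_part n v).
  assert (Hv : forall i, mat_vec n A v i = mat_vec n A x i + mat_vec n A y i).
  { intro i. rewrite <- mat_vec_plus. apply mat_vec_ext.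
    intros j _. apply vec_split. }
  assert (HIv : forall i, mat_vec n A (mat_vec n (I_refl n) v) i
                          = mat_vec n A x i - mat_vec n A y i).
  { intro i. rewrite <- mat_vec_minus. apply mat_vec_ext.
    intros j Hj. rewrite I_refl_act by exact Hj. unfold x, y, Rn_part, iRn_part.
    destruct (Nat.ltb j n); ring. }
  split.
  - intros H. split; intros k Hk.
    + specialize (H (n + k)%nat ltac:(lia)).
      rewrite Hv, I_refl_act, HIv in H by lia.
      destruct (Nat.ltb_spec (n + k) n); [lia | lra].
    + specialize (H k ltac:(lia)). rewrite Hv, I_refl_act, HIv in H by lia.
      destruct (Nat.ltb_spec k n); [lra | lia].
  - intros [Hx Hy] i Hi. rewrite Hv, I_refl_act, HIv by exact Hi.
    destruct (Nat.ltb_spec i n).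
    + rewrite Hy by exact H. ring.
    + replace i with (n + (i - n))%nat by lia. rewrite Hx by lia. ring.
Qed.

Lemma flow_reflection_shift n T (Psi : R -> mat)
  (Hper : forall t, mat_eq n (Psi (t + T)) (mat_mul n (Psi t) (Psi T)))
  (Hrev : forall t, mat_eq n (Psi (- t))
                      (mat_mul n (I_refl n) (mat_mul n (Psi t) (I_refl n)))) s u :
  vec_eq n (mat_vec n (Psi (T - s)) u)
    (mat_vec n (I_refl n) (mat_vec n (Psi s) (mat_vec n (I_refl n) (mat_vec n (Psi T) u)))).
Proof.
  intros i Hi. replace (T - s) with (- s + T) by ring.
  rewrite (mat_vec_mat_eq n _ _ u (Hper (- s)) i Hi), mat_vec_mul.
  rewrite (mat_vec_mat_eq n _ _ _ (Hrev s) i Hi), !mat_vec_mul.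
  apply mat_vec_compat; [|exact Hi]. intros j _. apply mat_vec_mul.
Qed.

Definition meets_trivially (n : nat) (A : mat) (S : vec -> Prop) : Prop :=
  forall w, (exists v, S v /\ vec_eq n w (mat_vec n A v)) -> S w -> vec_eq n w vec0.

Section FixedVectors.

Variables (n : nat) (A P : mat).
Hypothesis HA : symplectic n A.
Hypothesis Hshift : forall u, vec_eq n (mat_vec n A u)
  (mat_vec n (I_refl n) (mat_vec n A (mat_vec n (I_refl n) (mat_vec n P u)))).

Lemma fixed_iff_commutes_with_I_refl v : in_ker_minus_id n P v <->
  vec_eq n (mat_vec n A v) (mat_vec n (I_refl n) (mat_vec n A (mat_vec n (I_refl n) v))).
Proof.
  split; intros H i Hi.
  - rewrite Hshift by exact Hi. apply mat_vec_compat; [|exact Hi].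
    apply mat_vec_compat, mat_vec_compat, H.
  - revert i Hi. apply I_refl_injective, (symplectic_injective n A _ _ HA), I_refl_injective.
    intros i Hi. rewrite <- Hshift, H by exact Hi. reflexivity.
Qed.

Lemma fixed_iff_parts v : in_ker_minus_id n P v <->
  in_Rn n (mat_vec n A (Rn_part n v)) /\ in_iRn n (mat_vec n A (iRn_part n v)).
Proof. rewrite fixed_iff_commutes_with_I_refl. apply commutes_with_I_refl_iff. Qed.

Lemma fixed_trivial_iff_meets_trivially :
  (forall v, in_ker_minus_id n P v -> vec_eq n v vec0) <->
  meets_trivially n A (in_Rn n) /\ meets_trivially n A (in_iRn n).
Proof.
  split.
  - intros Hker. split; intros w [v [Hv Hw]] Hw'.
    + destruct (in_Rn_split n v Hv) as [Hx Hy].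
      assert (Hfix : in_ker_minus_id n P v).
      { apply fixed_iff_parts. split.
        - apply (in_Rn_compat n _ w); [|exact Hw'].
          intros i Hi. rewrite Hw by exact Hi. apply mat_vec_compat; assumption.
        - apply (in_iRn_compat n _ vec0), in_iRn_vec0. apply mat_vec_null, Hy. }
      intros i Hi. rewrite Hw by exact Hi. exact (mat_vec_null n A v (Hker v Hfix) i Hi).
    + destruct (in_iRn_split n v Hv) as [Hx Hy].
      assert (Hfix : in_ker_minus_id n P v).
      { apply fixed_iff_parts. split.
        - apply (in_Rn_compat n _ vec0), in_Rn_vec0. apply mat_vec_null, Hx.
        - apply (in_iRn_compat n _ w); [|exact Hw'].
          intros i Hi. rewrite Hw by exact Hi. apply mat_vec_compat; assumption. }
      intros i Hi. rewrite Hw by exact Hi. exact (mat_vec_null n A v (Hker v Hfix) i Hi).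
  - intros [HRn HiRn] v Hv. apply fixed_iff_parts in Hv as [Hx Hy].
    assert (Hx0 : vec_eq n (Rn_part n v) vec0).
    { apply (symplectic_kernel_trivial n A _ HA), HRn; [|exact Hx].
      exists (Rn_part n v). split; [apply Rn_part_in_Rn | intros i _; reflexivity]. }
    assert (Hy0 : vec_eq n (iRn_part n v) vec0).
    { apply (symplectic_kernel_trivial n A _ HA), HiRn; [|exact Hy].
      exists (iRn_part n v). split; [apply iRn_part_in_iRn | intros i _; reflexivity]. }
    intros i Hi. rewrite (vec_split n v), Hx0, Hy0 by exact Hi. unfold vec0. ring.
Qed.

End FixedVectors.

Theorem proposition3p4 (n : nat) (T : R) (Psi : R -> mat)
  (Hsmooth : smooth_mat n Psi)
  (Hsp : forall t, symplectic n (Psi t))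
  (H0 : mat_eq n (Psi 0) id_mat)
  (Hper : forall t, mat_eq n (Psi (t + T)) (mat_mul n (Psi t) (Psi T)))
  (Hrev : forall t, mat_eq n (Psi (- t))
                      (mat_mul n (I_refl n) (mat_mul n (Psi t) (I_refl n)))) :
  (* dim ker (Psi T - 1) = 0, i.e. the kernel is {0} *)
  (forall v, in_ker_minus_id n (Psi T) v -> vec_eq n v vec0)
  <->
  ((* Psi(T/2) R^n  ∩  R^n = {0} *)
   (forall w, (exists v, in_Rn n v /\ vec_eq n w (mat_vec n (Psi (T / 2)) v)) ->
              in_Rn n w -> vec_eq n w vec0)
   /\
   (* Psi(T/2) iR^n  ∩  iR^n = {0} *)
   (forall w, (exists v, in_iRn n v /\ vec_eq n w (mat_vec n (Psi (T / 2)) v)) ->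
              in_iRn n w -> vec_eq n w vec0)).
Proof.
  apply (fixed_trivial_iff_meets_trivially n (Psi (T / 2)) (Psi T) (Hsp (T / 2))).
  intro u. replace (T / 2) with (T - T / 2) at 1 by field.
  apply flow_reflection_shift; assumption.
Qed.
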